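(* Let $\sigma:[0,\infty)\to[0,\infty)$ be nondecreasing with $\lim_{t\to\infty}\sigma(t)=\infty$. If $\gamma(\sigma)>1$, then $\gamma(\sigma)=\gamma((\sigma^{\star})^{\iota})+1$.
   Context: Upper Legendre conjugate: $\sigma^{\star}(s):=\sup_{t\ge0}\{\sigma(t)-st\}$ for $s>0$; $(\sigma^{\star})^{\iota}(t):=\sigma^{\star}(1/t)$ for $t>0$. For a nondecreasing function $\sigma$ tending to $\infty$ and $\gamma>0$, $(P_{\sigma,\gamma})$ holds if there is $K>1$ with $\limsup_{t\to\infty}\sigma(K^{\gamma}t)/\sigma(t)<K$; $\gamma(\sigma):=\sup\{\gamma>0:(P_{\sigma,\gamma})\text{ holds}\}$, and $:=0$ if none holds. *)

From HB Require Import structures.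
From mathcomp Require Import all_boot all_order all_algebra.
From mathcomp Require Import all_classical all_reals all_analysis.
Set Implicit Arguments. Unset Strict Implicit. Unset Printing Implicit Defensive.
Import Order.TTheory GRing.Theory Num.Theory.
Import numFieldNormedType.Exports.
Local Open Scope classical_set_scope.
Local Open Scope ring_scope.

Definition legendre_conj {R : realType} (sigma : R -> R) (s : R) : \bar R :=
  ereal_sup [set (sigma t - s * t)%:E | t in [set t : R | 0 <= t]].

(* iota-transform of the conjugate: t |-> sigma-star(1/t), for t > 0; real-valued via [fine]
   (it is finite under the hypotheses of the statement). *)
Definition legendre_conj_iota {R : realType} (sigma : R -> R) (t : R) : R :=
  fine (legendre_conj sigma t^-1).

Definition propP {R : realType} (sigma : R -> R) (g : R) : Prop :=
  exists K : R, 1 < K /\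
    (limf_esup (fun t : R => (sigma (K `^ g * t) / sigma t)%:E) +oo%R
      < K%:E)%E.

Definition gammaI {R : realType} (sigma : R -> R) : \bar R :=
  if `[< exists g : R, 0 < g /\ propP sigma g >] then
    ereal_sup [set g%:E | g in [set g : R | 0 < g /\ propP sigma g]]
  else 0%E.

From mathcomp Require Import ring lra.
From mathcomp Require Import all_boot all_order all_algebra.
From mathcomp Require Import all_classical all_reals all_analysis.
Import Order.TTheory GRing.Theory Num.Theory.
Import numFieldNormedType.Exports.
Local Open Scope classical_set_scope.
Local Open Scope ring_scope.
Set Implicit Arguments. Unset Strict Implicit. Unset Printing Implicit Defensive.

(* Writing K = e^a and L = e^l, property (P_{sigma,gamma}) says that eventually
   sigma(e^(gamma a) t) <= e^l sigma(t) for some 0 <= l < a.  When gamma > 1 this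
   is sigma(H t) <= L sigma(t) with L < H, so sigma is dominated by affine
   functions of slope sigma(u)/u and sigma(u)/u -> 0; hence
   psi(t) = sigma*(1/t) is finite and tends to +oo.  Substituting u = H v in the
   supremum defining sigma* turns sigma(H t) <= L sigma(t) into
   psi((H/L) t) <= L psi(t), which is (P_{psi,gamma-1}).  Conversely, evaluating
   the supremum defining psi(H^n tau) at tau = u/sigma(u) turns
   psi(H t) <= L psi(t) into sigma((H L)^n u) <= (M+1) L^n sigma(u), which is
   (P_{sigma,gamma+1}) for n large.  So the admissible exponents of sigma above 1
   are exactly those of psi shifted by one. *)

Definition dilation_bounded (R : realType) (f : R -> R) (H L : R) :=
  exists t0 : R, 0 <= t0 /\ forall t : R, t0 <= t -> f (H * t) <= L * f t.

Lemma eventually_gt_of_cvgry (R : realType) (f : R -> R) (c : R) :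
  f t @[t --> +oo] --> +oo -> exists T : R, forall t : R, T <= t -> c < f t.
Proof.
move=> f_cvgy; have [M [_ hM]] := cvgry_gt f_cvgy c.
by exists (M + 1) => t Mt; apply: hM; lra.
Qed.

Section PropP.
Variables (R : realType) (f : R -> R).
Hypothesis f_pos : exists T : R, forall t : R, T <= t -> 0 < f t.

Lemma propP_dilation_bounded (g : R) : propP f g ->
  exists a l : R, [/\ 0 < a, 0 <= l, l < a &
    dilation_bounded f (expR (g * a)) (expR l)].
Proof.
case=> K [K_gt1 /ereal_inf_lt [_ [V [M [_ VM]] <-] supV_lt]].
have [L [L_ge1 L_ltK supV_le]] : exists L, [/\ 1 <= L, L < K &
    (ereal_sup [set (f (K `^ g * t) / f t)%:E | t in V] <= L%:E)%E].
  move: supV_lt; case: (ereal_sup _) => [r| |] // r_lt.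
    exists (Num.max r 1); rewrite le_max lexx orbT gt_max K_gt1 andbT -lte_fin.
    by rewrite lee_fin le_max lexx.
  by exists 1; rewrite lexx K_gt1 leNye.
have K_gt0 : 0 < K by lra.
exists (ln K), (ln L); split.
- by rewrite ln_gt0.
- by rewrite ln_ge0.
- by rewrite ltr_ln // posrE; lra.
rewrite lnK ?posrE; last lra.
have -> : expR (g * ln K) = K `^ g by rewrite /powR gt_eqF.
have [T f_gt0] := f_pos.
exists (Num.max (M + 1) (Num.max T 0)); split; first by rewrite !le_max lexx !orbT.
move=> t; rewrite !ge_max => /and3P[Mt Tt _].
have ft_gt0 := f_gt0 t Tt.
have : ((f (K `^ g * t) / f t)%:E <= L%:E)%E.
  by apply: le_trans supV_le; apply: ereal_sup_ubound; exists t => //; apply: VM; lra.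
by rewrite lee_fin ler_pdivrMr.
Qed.

Lemma dilation_bounded_propP (g a l : R) : 0 < a -> l < a ->
  dilation_bounded f (expR (g * a)) (expR l) -> propP f g.
Proof.
move=> a_gt0 l_lt_a [t0 [_ dil]]; have [T f_gt0] := f_pos.
exists (expR a); split; first by rewrite expR_gt1.
have -> : expR a `^ g = expR (g * a) by rewrite /powR gt_eqF ?expR_gt0 // expRK.
apply: (@le_lt_trans _ _ (expR l)%:E); last by rewrite lte_fin ltr_expR.
set V := [set t | Num.max t0 T < t].
apply: (@le_trans _ _ (ereal_sup [set (f (expR (g * a) * t) / f t)%:E | t in V])).
  apply: ereal_inf_lbound; exists V => //.
  by exists (Num.max t0 T); split; [exact: num_real | move=> x].
apply: ge_ereal_sup => _ [t + <-]; rewrite /V /= gt_max => /andP[t0t Tt].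
by rewrite lee_fin ler_pdivrMr ?f_gt0 ?dil // ltW.
Qed.

End PropP.

Lemma dilation_bounded_iter (R : realType) (f : R -> R) (H L : R) :
  1 <= H -> 0 <= L -> dilation_bounded f H L ->
  exists t0 : R, 0 <= t0 /\ forall n (t : R), t0 <= t -> f (H ^+ n * t) <= L ^+ n * f t.
Proof.
move=> H_ge1 L_ge0 [t0 [t0_ge0 dil]]; exists t0; split => // n t t0t.
have t_ge0 : 0 <= t by lra.
elim: n => [|n IH]; first by rewrite !expr0 !mul1r.
rewrite !exprS -!mulrA; apply: le_trans (dil _ _) (ler_wpM2l L_ge0 IH).
by apply: le_trans t0t _; rewrite ler_peMl ?exprn_ege1.
Qed.

Section LegendreConj.
Variables (R : realType) (sigma : R -> R) (t c : R).
Hypothesis sigma_le : forall u : R, 0 <= u -> sigma u - t^-1 * u <= c.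

Lemma legendre_conj_fin : legendre_conj sigma t^-1 = (legendre_conj_iota sigma t)%:E.
Proof.
rewrite /legendre_conj_iota; set S := legendre_conj sigma t^-1.
have : (S <= c%:E)%E by apply: ge_ereal_sup => _ [u /= u0 <-]; rewrite lee_fin sigma_le.
have : ((sigma 0 - t^-1 * 0)%:E <= S)%E by apply: ereal_sup_ubound; exists 0 => /=.
by clearbody S; case: S.
Qed.

Lemma legendre_conj_iota_ge (u : R) : 0 <= u -> sigma u - t^-1 * u <= legendre_conj_iota sigma t.
Proof.
by move=> u_ge0; rewrite -lee_fin -legendre_conj_fin; apply: ereal_sup_ubound; exists u.
Qed.

Lemma legendre_conj_iota_le : legendre_conj_iota sigma t <= c.
Proof.
rewrite -lee_fin -legendre_conj_fin.
by apply: ge_ereal_sup => _ [u /= u0 <-]; rewrite lee_fin sigma_le.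
Qed.

End LegendreConj.

Lemma expR_powS_le_pow (R : realType) (h l : R) : 0 <= l -> l < h ->
  forall n, (Num.Def.archi_bound (l / (h - l)) <= n)%N ->
  expR l ^+ n.+1 <= expR h ^+ n.
Proof.
move=> l_ge0 l_lt_h n n_ge; rewrite -!expRM_natl ler_expR.
have hl_gt0 : 0 < h - l by lra.
have := archi_boundP (divr_ge0 l_ge0 (ltW hl_gt0)); rewrite ltr_pdivrMr // => k_gt.
have : (Num.Def.archi_bound (l / (h - l)))%:R * (h - l) <= n%:R * (h - l).
  by rewrite ler_wpM2r ?ler_nat // ltW.
rewrite -natr1; nra.
Qed.

Lemma exists_expR_pow_ge (R : realType) (h u v : R) : 0 < h -> 0 < u ->
  exists n, v <= expR h ^+ n * u.
Proof.
move=> h_gt0 u_gt0; set n := Num.Def.archi_bound (`|v| / (u * h)).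
exists n; rewrite -expRM_natl.
have := archi_boundP (divr_ge0 (normr_ge0 v) (ltW (mulr_gt0 u_gt0 h_gt0))).
rewrite -/n ltr_pdivrMr ?mulr_gt0 // => n_gt.
have := expR_ge1Dx (n%:R * h); have := ler_norm v; nra.
Qed.

Section RegularGrowth.
Variables (R : realType) (sigma : R -> R).
Hypothesis sigma_nondecr : forall s t : R, 0 <= s -> s <= t -> sigma s <= sigma t.
Hypothesis sigma_cvgy : sigma t @[t --> +oo] --> +oo.
Variables h l : R.
Hypothesis l_ge0 : 0 <= l.
Hypothesis l_lt_h : l < h.
Hypothesis sigma_dil : dilation_bounded sigma (expR h) (expR l).

Local Notation psi := (legendre_conj_iota sigma).

Let h_gt0 : 0 < h. Proof. exact: le_lt_trans l_ge0 l_lt_h. Qed.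
Let expRh_ge1 : 1 <= expR h. Proof. by rewrite -expR0 ler_expR ltW. Qed.
Let expRl_ge1 : 1 <= expR l. Proof. by rewrite -expR0 ler_expR. Qed.

Lemma sigma_eventually_pos : exists T : R, forall t : R, T <= t -> 0 < sigma t.
Proof. exact: eventually_gt_of_cvgry. Qed.

Lemma sigma_le_affine : exists M t0 : R, [/\ 1 <= M, 0 < t0 & forall u : R, t0 <= u ->
  0 < sigma u /\ forall v : R, 0 <= v -> sigma v <= M * sigma u + v / u * sigma u].
Proof.
have [t1 [_ sigma_iter]] := dilation_bounded_iter expRh_ge1 (ltW (expR_gt0 l)) sigma_dil.
have [T sigma_pos] := sigma_eventually_pos.
set k := Num.Def.archi_bound (l / (h - l)); set M := expR l ^+ k.
have M_ge1 : 1 <= M by apply: exprn_ege1.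
exists M, (Num.max 1 (Num.max t1 T)); split => //; first by rewrite lt_max ltr01.
move=> u; rewrite !ge_max => /and3P[u_ge1 t1u Tu].
have su_gt0 := sigma_pos u Tu; split => // v v_ge0.
have u_gt0 : 0 < u by lra.
have vu_ge0 : 0 <= v / u * sigma u by rewrite mulr_ge0 ?divr_ge0 // ltW.
have Msu : sigma u <= M * sigma u by rewrite ler_peMl // ltW.
have [n] := exists_expR_pow_ge v h_gt0 u_gt0.
elim: n v v_ge0 vu_ge0 => [|n IH] v v_ge0 vu_ge0 v_le.
  by rewrite expr0 mul1r in v_le; have := sigma_nondecr v_ge0 v_le; lra.
have [|hvn] := leP v (expR h ^+ n * u); first exact: IH.
have sv_le : sigma v <= expR l ^+ n.+1 * sigma u.
  exact: le_trans (sigma_nondecr v_ge0 v_le) (sigma_iter _ _ t1u).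
have [n_lt|k_le] := leqP n.+1 k.
  have : expR l ^+ n.+1 <= M by apply: ler_weXn2l.
  by move/(ler_wpM2r (ltW su_gt0)); lra.
have : expR l ^+ n.+1 <= v / u.
  rewrite ler_pdivlMr //; apply: le_trans _ (ltW hvn).
  by apply: ler_wpM2r; [exact: ltW | exact: expR_powS_le_pow].
move/(ler_wpM2r (ltW su_gt0)).
have : 0 <= M * sigma u by rewrite mulr_ge0 ?ltW //; lra.
lra.
Qed.

(* sigma(H^n T) <= L^n sigma(T) while H^n / L^n = e^{n (h - l)} is unbounded. *)
Lemma sigma_sublinear (eps T : R) : 0 < eps ->
  exists u : R, [/\ T <= u, 0 < u & sigma u <= eps * u].
Proof.
move=> eps_gt0.
have [t1 [_ sigma_iter]] := dilation_bounded_iter expRh_ge1 (ltW (expR_gt0 l)) sigma_dil.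
have [T1 sigma_pos] := sigma_eventually_pos.
set T' := Num.max 1 (Num.max t1 (Num.max T T1)).
have [T'_ge1 t1T' TT' T1T'] : [/\ 1 <= T', t1 <= T', T <= T' & T1 <= T'].
  by rewrite !le_max !lexx !orbT.
have sT'_gt0 := sigma_pos T' T1T'.
have eT'_gt0 : 0 < eps * T' by rewrite mulr_gt0 //; lra.
have hl_gt0 : 0 < h - l by rewrite subr_gt0.
have [n] := exists_expR_pow_ge (sigma T') hl_gt0 eT'_gt0.
rewrite -expRM_natl => n_ge.
have Hn_ge1 : 1 <= expR h ^+ n by apply: exprn_ege1.
exists (expR h ^+ n * T'); split.
- by apply: le_trans TT' _; rewrite ler_peMl //; lra.
- by rewrite mulr_gt0 ?exprn_gt0 ?expR_gt0 //; lra.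
apply: (le_trans (sigma_iter n T' t1T')).
have -> : expR h ^+ n = expR l ^+ n * expR (n%:R * (h - l)).
  by rewrite -!expRM_natl -expRD; congr expR; ring.
by rewrite -mulrA mulrCA ler_pM2l ?exprn_gt0 ?expR_gt0 // mulrCA.
Qed.

Lemma legendre_conj_bounded (t : R) : 0 < t ->
  exists c : R, forall u : R, 0 <= u -> sigma u - t^-1 * u <= c.
Proof.
move=> t_gt0.
have [M [t1 [_ _ sigma_aff]]] := sigma_le_affine.
have tinv_gt0 : 0 < t^-1 by rewrite invr_gt0.
have [u1 [t1u1 u1_gt0 su1]] := sigma_sublinear t1 tinv_gt0.
have [_ sigma_aff1] := sigma_aff u1 t1u1.
exists (M * sigma u1) => v v_ge0.
have : v / u1 * sigma u1 <= t^-1 * v.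
  rewrite -mulrA [t^-1 * v]mulrC; apply: ler_wpM2l => //.
  by rewrite mulrC ler_pdivrMr.
have := sigma_aff1 v v_ge0; lra.
Qed.

Lemma psi_ge (t u : R) : 0 < t -> 0 <= u -> sigma u - t^-1 * u <= psi t.
Proof.
move=> t_gt0 u_ge0; have [c sigma_le] := legendre_conj_bounded t_gt0.
exact: (legendre_conj_iota_ge sigma_le u_ge0).
Qed.

Lemma psi_unbounded (c : R) : exists T : R, 0 < T /\ forall t : R, T <= t -> c <= psi t.
Proof.
have [T1 sigma_gt] := eventually_gt_of_cvgry (c + 1) sigma_cvgy.
set u := Num.max T1 0.
have u_ge0 : 0 <= u by rewrite le_max lexx orbT.
have su_gt : c + 1 < sigma u by apply: sigma_gt; rewrite le_max lexx.
exists (Num.max 1 u); split; first by rewrite lt_max ltr01.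
move=> t; rewrite ge_max => /andP[t_ge1 ut].
have t_gt0 : 0 < t by lra.
have : t^-1 * u <= 1 by rewrite mulrC ler_pdivrMr // mul1r.
have := psi_ge t_gt0 u_ge0; lra.
Qed.

Lemma sigma_eventually_sublinear (eps : R) : 0 < eps ->
  exists t1 : R, forall u : R, t1 <= u -> sigma u <= eps * u.
Proof.
move=> eps_gt0.
have [M [t0 [M_ge1 _ sigma_aff]]] := sigma_le_affine.
have eps2_gt0 : 0 < eps / 2 by rewrite divr_gt0.
have [u1 [t0u1 u1_gt0 su1]] := sigma_sublinear t0 eps2_gt0.
have [su1_gt0 sigma_aff1] := sigma_aff u1 t0u1.
exists (M * u1) => u Mu1u.
have u_gt0 : 0 < u by apply: lt_le_trans Mu1u; rewrite mulr_gt0 //; lra.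
have : M * sigma u1 <= u / u1 * sigma u1.
  by apply: ler_wpM2r; [exact: ltW | rewrite ler_pdivlMr].
have : u / u1 * sigma u1 <= eps / 2 * u.
  apply: le_trans (ler_wpM2l _ su1) _; first by rewrite divr_ge0 ?ltW.
  by rewrite mulrCA divfK ?gt_eqF // mulrC.
have := sigma_aff1 u (ltW u_gt0); lra.
Qed.

Lemma psi_dilation_bounded (H L : R) : 0 < H -> 1 <= L ->
  dilation_bounded sigma H L -> dilation_bounded psi (H / L) L.
Proof.
move=> H_gt0 L_ge1 [t0 [t0_ge0 dil]].
have L_gt0 : 0 < L by lra.
have [T [T_gt0 psi_ge_T]] := psi_unbounded (sigma (H * t0) / L).
exists T; split => [|t Tt]; first exact: ltW.
have t_gt0 : 0 < t by lra.
have sHt0_le : sigma (H * t0) <= L * psi t.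
  by rewrite [L * _]mulrC -ler_pdivrMr //; apply: psi_ge_T.
apply: legendre_conj_iota_le => u u_ge0; set v := u / H.
have -> : (H / L * t)^-1 * u = L * (t^-1 * v).
  by rewrite /v; field; rewrite !gt_eqF.
have u_eq : u = H * v by rewrite /v mulrC divfK // gt_eqF.
have v_ge0 : 0 <= v by rewrite divr_ge0 // ltW.
have [t0v|vt0] := leP t0 v.
  have := dil v t0v; have := psi_ge t_gt0 v_ge0.
  move/(ler_wpM2l (ltW L_gt0)); rewrite u_eq; lra.
have : sigma u <= sigma (H * t0) by rewrite sigma_nondecr // u_eq ler_pM2l // ltW.
have : 0 <= L * (t^-1 * v) by rewrite !mulr_ge0 ?invr_ge0 // ltW.
lra.
Qed.

Lemma dilation_bounded_of_psi (H L : R) : 1 <= H -> 1 <= L -> dilation_bounded psi H L ->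
  exists M : R, 1 <= M /\ forall n, dilation_bounded sigma ((H * L) ^+ n) ((M + 1) * L ^+ n).
Proof.
move=> H_ge1 L_ge1 psi_dil.
have [M [t0 [M_ge1 t0_gt0 sigma_aff]]] := sigma_le_affine.
exists M; split => // n.
have [tg [_ psi_iter]] := dilation_bounded_iter H_ge1 (le_trans ler01 L_ge1) psi_dil.
set tg' := Num.max tg 1.
have [tg'_ge1 tg_le] : 1 <= tg' /\ tg <= tg' by rewrite !le_max !lexx orbT.
have tg'_inv_gt0 : 0 < tg'^-1 by rewrite invr_gt0; lra.
have [t1 sigma_small] := sigma_eventually_sublinear tg'_inv_gt0.
exists (Num.max t0 t1); split; first by rewrite le_max ltW.
move=> u; rewrite ge_max => /andP[t0u t1u].
have [su_gt0 sigma_affu] := sigma_aff u t0u.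
have u_gt0 : 0 < u by lra.
set tau := u / sigma u.
have tau_gt0 : 0 < tau by apply: divr_gt0.
have tg_tau : tg <= tau.
  apply: (le_trans tg_le); rewrite /tau ler_pdivlMr // mulrC -ler_pdivlMr; last lra.
  by rewrite mulrC; apply: sigma_small.
have psi_tau : psi tau <= M * sigma u.
  apply: legendre_conj_iota_le => v v_ge0.
  have -> : tau^-1 * v = v / u * sigma u by rewrite /tau invf_div; field; rewrite gt_eqF.
  have := sigma_affu v v_ge0; lra.
have Hn_gt0 : 0 < H ^+ n by rewrite exprn_gt0 //; lra.
have Ln_gt0 : 0 < L ^+ n by rewrite exprn_gt0 //; lra.
have w_ge0 : 0 <= (H * L) ^+ n * u by rewrite exprMn !mulr_ge0 // ltW.
have := psi_ge (mulr_gt0 Hn_gt0 tau_gt0) w_ge0.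
have -> : (H ^+ n * tau)^-1 * ((H * L) ^+ n * u) = L ^+ n * sigma u.
  by rewrite exprMn /tau; field; rewrite !gt_eqF.
have := psi_iter n tau tg_tau; have := ler_wpM2l (ltW Ln_gt0) psi_tau.
nra.
Qed.

Lemma psi_eventually_pos : exists T : R, forall t : R, T <= t -> 0 < psi t.
Proof.
have [T [_ psi_ge1]] := psi_unbounded 1.
by exists T => t /psi_ge1; apply: lt_le_trans.
Qed.

Lemma propP_psi (g : R) : 1 < g -> propP sigma g -> propP psi (g - 1).
Proof.
move=> g_gt1 Pg.
have [a [b [a_gt0 b_ge0 b_lt_a dil]]] := propP_dilation_bounded sigma_eventually_pos Pg.
have expRb_ge1 : 1 <= expR b by rewrite -expR0 ler_expR.
have := psi_dilation_bounded (expR_gt0 (g * a)) expRb_ge1 dil.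
rewrite -expRB.
have -> : g * a - b = (g - 1) * ((g * a - b) / (g - 1)) by field; rewrite gt_eqF //; lra.
apply: (dilation_bounded_propP psi_eventually_pos); first by rewrite divr_gt0; nra.
by rewrite ltr_pdivlMr; nra.
Qed.

Lemma propP_of_psi (g : R) : 0 < g -> propP psi g -> propP sigma (g + 1).
Proof.
move=> g_gt0 Pg.
have [a [b [a_gt0 b_ge0 b_lt_a dil]]] := propP_dilation_bounded psi_eventually_pos Pg.
have expRb_ge1 : 1 <= expR b by rewrite -expR0 ler_expR.
have expRga_ge1 : 1 <= expR (g * a) by rewrite -expR0 ler_expR ltW // mulr_gt0.
have [M [M_ge1 sigma_dil_n]] := dilation_bounded_of_psi expRga_ge1 expRb_ge1 dil.
set c := ln (M + 1).
have c_ge0 : 0 <= c by rewrite ln_ge0 //; lra.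
have Mc : expR c = M + 1 by rewrite lnK // posrE; lra.
have gal_gt0 : 0 < g * (a - b) by rewrite mulr_gt0 //; lra.
set n := (Num.Def.archi_bound ((g + 1) * c / (g * (a - b)))).+1.
have n_gt : (g + 1) * c < n%:R * (g * (a - b)).
  rewrite -ltr_pdivrMr //; apply: lt_le_trans (archi_boundP _) _.
    by rewrite divr_ge0 ?mulr_ge0 // ?ltW //; lra.
  by rewrite ler_nat leqnSn.
have n_ge1 : 1 <= n%:R :> R by rewrite ler1n.
have := sigma_dil_n n.
have -> : (expR (g * a) * expR b) ^+ n = expR ((g + 1) * (n%:R * (g * a + b) / (g + 1))).
  by rewrite -expRD -expRM_natl; congr expR; field; rewrite gt_eqF //; lra.
rewrite -Mc -expRM_natl -expRD.
apply: (dilation_bounded_propP sigma_eventually_pos).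
  by rewrite divr_gt0 ?mulr_gt0 //; nra.
by rewrite ltr_pdivlMr; nra.
Qed.

End RegularGrowth.

Lemma gammaI_eq_add1 (R : realType) (f g : R -> R) (g0 : R) :
  1 < g0 -> propP f g0 ->
  (forall x : R, 1 < x -> propP f x -> propP g (x - 1)) ->
  (forall y : R, 0 < y -> propP g y -> propP f (y + 1)) ->
  gammaI f = (gammaI g + 1)%E.
Proof.
move=> g0_gt1 Pg0 down up.
rewrite /gammaI; case: asboolP => [_|]; last by case; exists g0; split => //; lra.
case: asboolP => [_|]; last by case; exists (g0 - 1); split; [lra | exact: down].
set Sf := ereal_sup _; set Sg := ereal_sup _.
have Sg_ge : ((g0 - 1)%:E <= Sg)%E.
  by apply: ereal_sup_ubound; exists (g0 - 1) => //; split; [lra | exact: down].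
apply/eqP; rewrite eq_le; apply/andP; split.
  apply: ge_ereal_sup => _ [x [x_gt0 Px] <-].
  have [x_le1|x_gt1] := leP x 1.
    by apply: le_trans (leeD2r 1%E Sg_ge); rewrite -EFinD lee_fin; lra.
  have : ((x - 1)%:E <= Sg)%E.
    by apply: ereal_sup_ubound; exists (x - 1) => //; split; [lra | exact: down].
  by move/(leeD2r 1%E); rewrite -EFinD subrK.
have : (Sg <= Sf - 1%:E)%E.
  apply: ge_ereal_sup => _ [y [y_gt0 Py] <-].
  rewrite leeBrDr // -EFinD; apply: ereal_sup_ubound.
  by exists (y + 1) => //; split; [lra | exact: up].
by move/(leeD2r 1%E); rewrite subeK.
Qed.

Theorem corollary2p25 (R : realType) (sigma : R -> R)
  (hpos : forall t : R, 0 <= t -> 0 <= sigma t)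
  (hmono : forall s t : R, 0 <= s -> s <= t -> sigma s <= sigma t)
  (hlim : sigma t @[t --> +oo] --> +oo)
  (hgt1 : (1 < gammaI sigma)%E) :
  gammaI sigma = (gammaI (legendre_conj_iota sigma) + 1)%E.
Proof.
have [g [g_gt1 Pg]] : exists g : R, 1 < g /\ propP sigma g.
  move: hgt1; rewrite /gammaI; case: asboolP => _; last by rewrite lte_fin ltr10.
  by case/ereal_sup_gt => _ [g [_ Pg] <-]; rewrite lte_fin; exists g.
have [a [l [a_gt0 l_ge0 l_lt_a dil]]] :=
  propP_dilation_bounded (sigma_eventually_pos hlim) Pg.
have l_lt_ga : l < g * a by nra.
apply: (gammaI_eq_add1 g_gt1 Pg).
- exact: (propP_psi hmono hlim l_ge0 l_lt_ga dil).
- exact: (propP_of_psi hmono hlim l_ge0 l_lt_ga dil).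
Qed.
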